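(* Let $n\ge1$, $k=\lfloor n/2\rfloor$, and let $T=(t_{ij})_{i,j=1}^n$ be the $n\times n$ matrix over the polynomial ring $\mathbb C[x_1,\dots,x_n]$ with $t_{ii}=0$, $t_{ij}=x_j$ for $i<j$ and $t_{ij}=-x_j$ for $i>j$. Then $$\det(\lambda\,\mathrm{Id}-T)=\lambda^n+\sigma_2\lambda^{n-2}+\sigma_4\lambda^{n-4}+\dots+\sigma_{2k}\lambda^{n-2k},$$ where $\sigma_r=\sum_{i_1<\dots<i_r}x_{i_1}\cdots x_{i_r}$ is the $r$-th elementary symmetric polynomial.
   Context: $\lambda$ is an indeterminate; the determinant is taken in $\mathbb C[x_1,\dots,x_n][\lambda]$. *)

From mathcomp Require Import all_boot all_order all_algebra all_field.
From mathcomp Require Import mpoly.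
Set Implicit Arguments. Unset Strict Implicit. Unset Printing Implicit Defensive.
Import GRing.Theory.
Local Open Scope ring_scope.

Definition Tmx (n : nat) : 'M[{mpoly algC[n]}]_n :=
  \matrix_(i < n, j < n)
    (if (i < j)%N then 'X_j else if (j < i)%N then - 'X_j else 0).

From mathcomp Require Import all_boot all_order all_algebra all_field.
From mathcomp Require Import mpoly.
From mathcomp Require Import ring zify.
Set Implicit Arguments. Unset Strict Implicit. Unset Printing Implicit Defensive.
Import GRing.Theory.
Local Open Scope ring_scope.

(* Transposing [lambda Id - T] gives the matrix with [lambda] on the diagonal
   and, in row [i], [x_i] above and [-x_i] below the diagonal.  Writing its
   first row as [(lambda - x_1) e_1 + x_1 (1, ..., 1)] and reducing the second
   determinant to a triangular one yields
   [2 det = prod_i (lambda + x_i) + prod_i (lambda - x_i)] by induction on [n].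
   Expanding both products by Vieta's formulas, the odd elementary symmetric
   terms cancel and the even ones double. *)

Lemma det_block1mx (R : comNzRingType) n (u : 'M[R]_(1, n)) (v : 'M[R]_(n, 1))
    (D : 'M[R]_n) :
  \det (block_mx 1%:M u v D : 'M[R]_(1 + n)) = \det (D - v *m u).
Proof.
have := det_mulmx (block_mx 1%:M 0 (-v) 1%:M) (block_mx 1%:M u v D).
rewrite mulmx_block det_lblock !det1 !mul1r => <-.
rewrite !mul1mx !mulmx1 !mul0mx !addr0 addNr mulNmx.
by rewrite det_ublock det1 mul1r addrC.
Qed.

Section SkewMatrix.
Variable R : comNzRingType.

Definition skew_mx n (a : R) (x : nat -> R) : 'M[R]_n :=
  \matrix_(i < n, j < n)
    (if i == j :> nat then a else if (j < i)%N then - x i else x i).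

Lemma det_skew_mx_recl n a x :
  \det (skew_mx n.+1 a x) = (a - x 0%N) * \det (skew_mx n a (x \o succn))
                            + x 0%N * \prod_(i < n) (a + x i.+1).
Proof.
pose B : 'M[R]_(1 + n) :=
  \matrix_(i, j) (if i == 0 :> nat then (j == 0 :> nat)%:R else skew_mx _ a x i j).
pose C : 'M[R]_(1 + n) :=
  \matrix_(i, j) (if i == 0 :> nat then 1 else skew_mx _ a x i j).
rewrite (@determinant_multilinear _ _ _ B C 0 (a - x 0%N) (x 0%N)); first last.
- by apply/matrixP=> i j; rewrite !mxE.
- by apply/matrixP=> i j; rewrite !mxE.
- apply/rowP=> j; rewrite !mxE /= eq_sym.
  by case: (_ == _); rewrite ?mulr1 ?mulr0 ?add0r ?subrK.
congr (_ * _ + _ * _).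
- rewrite -[B]submxK.
  have -> : ursubmx B = 0 by apply/matrixP=> i j; rewrite !ord1 !mxE.
  have -> : ulsubmx B = 1%:M by apply/matrixP=> i j; rewrite !ord1 !mxE.
  rewrite det_block1mx mulmx0 subr0; congr (\det _).
  by apply/matrixP=> i j; rewrite !mxE /= eqSS ltnS.
- rewrite -[C]submxK.
  have -> : ulsubmx C = 1%:M by apply/matrixP=> i j; rewrite !ord1 !mxE.
  (* Adding the first row to the others clears the entries below the diagonal. *)
  rewrite det_block1mx -det_tr det_trig.
    apply: eq_bigr => i _.
    by rewrite !mxE /= big_ord1 !mxE /= eqxx mulr1 opprK.
  apply/is_trig_mxP => i j lt_ij; rewrite !mxE big_ord1 !mxE /=.
  by rewrite eqSS ltnS (gtn_eqF lt_ij) lt_ij mulr1 opprK addNr.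
Qed.

Lemma det_skew_mx n a x :
  2%:R * \det (skew_mx n a x) = \prod_(i < n) (a + x i) + \prod_(i < n) (a - x i).
Proof.
elim: n x => [|n IHn] x; first by rewrite det_mx00 !big_ord0 mulr1 mulr2n.
rewrite det_skew_mx_recl mulrDr mulrCA IHn !big_ord_recl.
have lift0_prod (f : nat -> R) : \prod_(i < n) f (lift ord0 i) = \prod_(i < n) f i.+1.
  by apply: eq_bigr => i _; rewrite lift0.
rewrite (lift0_prod (fun k => a + x k)) (lift0_prod (fun k => a - x k)) /=.
ring.
Qed.

End SkewMatrix.

Lemma Viete_scaled (R : comNzRingType) n (s : {mpoly R[n]}) :
  \prod_(i < n) ('X - (s * 'X_i)%:P) =
  \sum_(k < n.+1) ((- s) ^+ k * mesym n R k)%:P * 'X^(n - k).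
Proof.
pose phi := mmap (intr : int -> {mpoly R[n]}) (fun i : 'I_n => s * 'X_i).
have phi_mesym k : phi (mesym n int k) = s ^+ k * mesym n R k.
  rewrite /phi /mesym rmorph_sum mulr_sumr; apply: eq_bigr => h /eqP hk.
  rewrite rmorph_prod /=; under eq_bigr do rewrite mmapX mmap1U.
  by rewrite big_split /= prodr_const hk.
have := congr1 (map_poly phi) (Viete n); rewrite rmorph_prod rmorph_sum /=.
under eq_bigr do rewrite rmorphB /= map_polyX map_polyC /= mmapX mmap1U.
move=> ->; apply: eq_bigr => k _.
rewrite !map_polyZ map_polyXn rmorphXn rmorphN1 /= -/phi phi_mesym.
by rewrite scalerA -mul_polyC mulrA -exprMn mulN1r.
Qed.

Lemma sum_even_terms (R : comNzRingType) (F : nat -> R) n :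
  \sum_(k < n.+1) (1 + (-1) ^+ k) * F k = 2%:R * \sum_(i < (n %/ 2).+1) F (2 * i)%N.
Proof.
have sum_double m :
    \sum_(k < 2 * m) (1 + (-1) ^+ k) * F k = 2%:R * \sum_(i < m) F (2 * i)%N.
  elim: m => [|m IHm]; first by rewrite muln0 !big_ord0 mulr0.
  rewrite mulnS !big_ord_recr /= IHm !exprS exprM sqrrN !expr1n.
  ring.
rewrite -sum_double.
have [n_odd | n_even] :
    (n.+1 = 2 * (n %/ 2).+1 \/ n.+2 = 2 * (n %/ 2).+1)%N by lia.
  by rewrite -n_odd.
(* For even n the extra odd-indexed term has weight 1 + (-1) = 0. *)
have odd_n1 : odd n.+1 by lia.
by rewrite -n_even [RHS]big_ord_recr /= -signr_odd odd_n1 addrN mul0r addr0.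
Qed.

Lemma sum_prod_XaddC_XsubC (R : comNzRingType) n :
  \prod_(i < n) ('X + ('X_i)%:P) + \prod_(i < n) ('X - ('X_i)%:P) =
  \sum_(k < n.+1) (1 + (-1) ^+ k) * ((mesym n R k)%:P * 'X^(n - k)).
Proof.
have prod_add : \prod_(i < n) ('X + ('X_i)%:P) =
                \prod_(i < n) ('X - ((-1) * 'X_i)%:P) :> {poly {mpoly R[n]}}.
  by apply: eq_bigr => i _; rewrite mulN1r polyCN (opprK ('X_i)%:P).
have prod_sub : \prod_(i < n) ('X - ('X_i)%:P) =
                \prod_(i < n) ('X - (1 * 'X_i)%:P) :> {poly {mpoly R[n]}}.
  by apply: eq_bigr => i _; rewrite mul1r.
(* Unifying one product with the other is very slow, hence the patterns. *)
rewrite prod_add [X in _ + X]prod_sub.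
rewrite [X in X + _]Viete_scaled [X in _ + X]Viete_scaled.
rewrite -big_split; apply: eq_bigr => k _.
by rewrite opprK expr1n mul1r polyCM rmorphXn rmorphN1 mulrDl mul1r mulrA.
Qed.

(* Variables indexed by [nat]; indices [k >= n] give the junk value 0. *)
Definition mvar_nat n (k : nat) : {mpoly algC[n]} :=
  if insub k is Some i then 'X_i else 0.

Lemma char_poly_Tmx n :
  char_poly (Tmx n) = \det (skew_mx n 'X (fun k => (mvar_nat n k)%:P)).
Proof.
rewrite /char_poly -det_tr; congr (\det _); apply/matrixP => i j.
rewrite !mxE /mvar_nat valK -!val_eqE /=.
case: ltngtP => _ /=.
- by rewrite mulr0n sub0r.
- by rewrite mulr0n sub0r polyCN (opprK ('X_i)%:P).
- by rewrite subr0.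
Qed.

Theorem lemma5p5 (n : nat) : (1 <= n)%N ->
  char_poly (Tmx n) =
  \sum_(i < (n %/ 2).+1) (mesym n algC (2 * i))%:P * 'X^(n - 2 * i).
Proof.
(* The identity also holds for n = 0. *)
move=> _.
have two_neq0 : 2%:R != 0 :> {poly {mpoly algC[n]}}.
  by rewrite -polyC_natr polyC_eq0 -mpolyC_nat mpolyC_eq0 Num.Theory.pnatr_eq0.
have mvar_natE (i : 'I_n) : mvar_nat n i = 'X_i by rewrite /mvar_nat valK.
apply: (mulfI two_neq0); rewrite char_poly_Tmx det_skew_mx.
under eq_bigr do rewrite mvar_natE.
under [X in _ + X]eq_bigr do rewrite mvar_natE.
rewrite sum_prod_XaddC_XsubC.
by rewrite (sum_even_terms (fun k => (mesym n algC k)%:P * 'X^(n - k))).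
Qed.
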